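(* Let $\mathcal{D}=\{t_1,\dots,t_n\}$ be a relational database whose tables are indexed according to a topological order of its (acyclic) foreign-key graph, with the relation $\preceq$ (affect-or-equal) defined below. For indices $i\le j$, we have $t_i\preceq t_j$ if and only if $t_i$ and $t_j$ are connected in the subgraph $\mathcal{G}_j$ of the foreign-key graph induced on the vertices $t_1,t_2,\dots,t_j$, where connectivity ignores edge directions and every table is considered connected to itself.
   Context: A relational database is a finite set of tables $t_1,\dots,t_n$. A foreign key constraint $\phi_{ij}$ means that table $t_i$ is a parent of table $t_j$ (i.e. $t_j$ references $t_i$); $\Phi_j$ denotes the set of all foreign key constraints on $t_j$. The foreign-key graph is the directed graph whose vertices are the tables, with an edge between $t_i$ and $t_j$ (directed from parent $t_i$ to child $t_j$) whenever some $\phi_{ij}\in\Phi_j$; it is assumed acyclic, and the indices are chosen according to a topological order, so that $\phi_{ij}\in\Phi_j$ implies $i<j$. Write $\mathbb{N}_m=\{1,2,\dots,m\}$. The relation ascend-or-equal $\preceq^*$ is defined by: $t_i\preceq^* t_j$ iff $i=j$, or there exists $k\in\mathbb{N}_n$ with $\phi_{ik}\in\Phi_k$ and $t_k\preceq^* t_j$. The relation affect-or-equal $\preceq$ is the (smallest) relation satisfying: $t_i\preceq t_j$ iff $t_i\preceq^* t_j$, or [$i<j$ and there exists $k\in\mathbb{N}_{j-1}\setminus\{i\}$ such that ($t_i\preceq t_k$ or $t_k\preceq t_i$) and $t_k\preceq t_j$]. *)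

From mathcomp Require Import all_boot.
Set Implicit Arguments. Unset Strict Implicit. Unset Printing Implicit Defensive.

(* A database with tables t_1..t_n is represented by its number of tables n
   and the foreign-key relation [fk : rel nat]: [fk i j] means phi_ij \in Phi_j,
   i.e. t_i is a parent of t_j.  Well-formedness (topological indexing) is a
   hypothesis of the theorem: fk i j -> 1 <= i < j <= n. *)

Inductive asc_eq (n : nat) (fk : rel nat) : nat -> nat -> Prop :=
| asc_eq_refl i : asc_eq n fk i i
| asc_eq_step i k j : 1 <= k <= n -> fk i k -> asc_eq n fk k j -> asc_eq n fk i j.

(* affect-or-equal  t_i <= t_j : the smallest relation satisfying the
   defining equivalence (least fixed point = inductive closure). *)
Inductive aff_eq (n : nat) (fk : rel nat) : nat -> nat -> Prop :=
| aff_eq_asc i j : asc_eq n fk i j -> aff_eq n fk i j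
| aff_eq_step i k j : i < j -> 1 <= k <= j.-1 -> k != i ->
    (aff_eq n fk i k \/ aff_eq n fk k i) -> aff_eq n fk k j -> aff_eq n fk i j.

Inductive conn_in (fk : rel nat) (j : nat) : nat -> nat -> Prop :=
| conn_in_refl a : conn_in fk j a a
| conn_in_step a b c : 1 <= a <= j -> 1 <= b <= j -> (fk a b || fk b a) ->
    conn_in fk j b c -> conn_in fk j a c.

(* Soundness: an ascent i <=* j is a directed path i -> ... -> j through tables
   below j, and each [aff_eq_step] glues, through some k < j, a connection of i
   and k inside G_(max i k) to a connection of k and j inside G_j.  The former
   comes from strong induction on the target, as [elim] gives no induction
   hypothesis for the disjunctive premise of [aff_eq_step].
   Completeness: walk an undirected path from i to j inside G_j backwards from
   j.  An edge x - y of G_j with y = j is a foreign key x -> j, hence an ascent;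
   otherwise x, y < j, the edge makes x and y affect-comparable, and
   [aff_eq_step] through k := y extends the relation from y to x. *)

From mathcomp Require Import all_boot zify.
Set Implicit Arguments. Unset Strict Implicit.

Section Connectivity.
Variable fk : rel nat.

Lemma conn_in_edge j a b :
  1 <= a <= j -> 1 <= b <= j -> fk a b || fk b a -> conn_in fk j a b.
Proof. by move=> ha hb e; apply: conn_in_step ha hb e (conn_in_refl _ _ _). Qed.

Lemma conn_in_trans j a b c :
  conn_in fk j a b -> conn_in fk j b c -> conn_in fk j a c.
Proof. by elim=> // x y z hx hy e _ IH /IH; apply: conn_in_step. Qed.

Lemma conn_in_sym j a b : conn_in fk j a b -> conn_in fk j b a.
Proof.
elim=> [//|x y z hx hy e _ IH]; first exact: conn_in_refl.
by apply: conn_in_trans IH (conn_in_edge hy hx _); rewrite orbC.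
Qed.

Lemma conn_in_widen j j' a b : j <= j' -> conn_in fk j a b -> conn_in fk j' a b.
Proof.
move=> hjj'; elim=> [x|x y z hx hy e _ IH]; first exact: conn_in_refl.
by apply: conn_in_step IH => //; lia.
Qed.

End Connectivity.

Section AffectOrEqual.
Variables (n : nat) (fk : rel nat).
Hypothesis fk_wf : forall i j, fk i j -> (1 <= i) && (i < j) && (j <= n).

Lemma fk_asc_eq i j : fk i j -> asc_eq n fk i j.
Proof.
move=> e; have bounds := fk_wf e.
by apply: asc_eq_step e (asc_eq_refl _ _ _); lia.
Qed.

Lemma fk_aff_eq_comparable a b :
  fk a b || fk b a -> aff_eq n fk a b \/ aff_eq n fk b a.
Proof. by case/orP=> e; [left | right]; apply/aff_eq_asc/fk_asc_eq. Qed.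

Lemma asc_eq_conn_in a b : asc_eq n fk a b -> a <= b /\ conn_in fk b a b.
Proof.
elim=> [x|i k j _ e _ [hkj IH]]; first by split; last exact: conn_in_refl.
have bounds := fk_wf e; split; first lia.
by apply: conn_in_step IH; rewrite ?e //; lia.
Qed.

Lemma aff_eq_conn_in a c : aff_eq n fk a c -> a <= c /\ conn_in fk c a c.
Proof.
have [b] := ubnP c; elim: b a c => // b IHb a c hcb H.
elim: H hcb => [i j /asc_eq_conn_in //|i k j hij hk hki Hik _ IHkj] hjb.
have [hkj Ckj] := IHkj hjb; split; first lia.
apply: conn_in_trans Ckj.
case: Hik => [/IHb [|hik Cik] | /IHb [|_ Cki]]; try lia.
- by apply: conn_in_widen Cik; lia.
- by apply/conn_in_sym; apply: conn_in_widen Cki; lia.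
Qed.

Lemma conn_in_aff_eq j a : j <= n -> conn_in fk j a j -> aff_eq n fk a j.
Proof.
move=> hjn; suff: forall c, conn_in fk j a c -> c = j -> aff_eq n fk a j by eauto.
move=> c; elim=> [x ->|x y z hx hy e _ IH Ez]; first exact/aff_eq_asc/asc_eq_refl.
have Ayj := IH Ez.
have [-> | hxj] := eqVneq x j; first exact/aff_eq_asc/asc_eq_refl.
have [Eyj | hyj] := eqVneq y j.
  subst y; case/orP: e => e; first exact/aff_eq_asc/fk_asc_eq.
  by have := fk_wf e; lia.
apply: (aff_eq_step (k := y)) Ayj; try lia.
- by apply/eqP=> Eyx; move: e; rewrite Eyx orbb => /fk_wf; lia.
- exact: fk_aff_eq_comparable.
Qed.

End AffectOrEqual.

Theorem lemma3p4 (n : nat) (fk : rel nat)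
  (fk_wf : forall i j, fk i j -> (1 <= i) && (i < j) && (j <= n))
  (i j : nat) (hi : 1 <= i) (hij : i <= j) (hj : j <= n) :
  aff_eq n fk i j <-> conn_in fk j i j.
Proof.
split; first by case/(aff_eq_conn_in fk_wf).
exact: (conn_in_aff_eq fk_wf hj).
Qed.
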